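(* With the notation of the context, the solution $x:[0,1]\to\mathbb{R}^{n_x}$ of the linear ODE $$\frac{dx}{d\lambda}=A(\lambda)x(\lambda)+b(\lambda),\qquad x(0)=x_0,$$ satisfies $x(1)=\Phi(1,0)x_0+E\,c$, where $\Phi(1,0)=I+E\,\Omega F^\top$ with $\Omega=\mathrm{diag}(\omega_i)$, $\omega_i=\big((1+\alpha_i)^{-1/2}-1\big)/\alpha_i$, and $c\in\mathbb{R}^{n_z}$ has entries $$c_i=\frac{\alpha_i\tilde z_i+\tilde x_i\big(1-\sqrt{1+\alpha_i}\big)}{\alpha_i(1+\alpha_i)}.$$ Moreover $b(\mu)=E\beta(\mu)$ with $\beta_i(\mu)=\dfrac{\tilde z_i(1+\tfrac12\mu\alpha_i)-\tfrac12\tilde x_i}{(1+\mu\alpha_i)^2}$.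
   Context: $P\in\mathbb{R}^{n_x\times n_x}$, $R\in\mathbb{R}^{n_z\times n_z}$ symmetric positive definite, $H\in\mathbb{R}^{n_z\times n_x}$ of full row rank, $\bar x\in\mathbb{R}^{n_x}$ (prior mean), $z\in\mathbb{R}^{n_z}$ (observation). $R^{-1/2}$ is the inverse of the symmetric positive definite square root of $R$. The EDH flow is defined by $A(\lambda)=-\tfrac12 PH^\top(\lambda HPH^\top+R)^{-1}H$ and $b(\lambda)=(I+2\lambda A(\lambda))\big[(I+\lambda A(\lambda))PH^\top R^{-1}z+A(\lambda)\bar x\big]$. Let $D=R^{-1/2}HPH^\top R^{-1/2}=V\Lambda V^\top$ with $V$ orthogonal and $\Lambda=\mathrm{diag}(\alpha_1,\dots,\alpha_{n_z})$, $\alpha_i>0$. Define $E=PH^\top R^{-1/2}V$, $F^\top=V^\top R^{-1/2}H$, $\tilde z=V^\top R^{-1/2}z$, $\tilde x=F^\top\bar x$. *)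

From HB Require Import structures.
From mathcomp Require Import all_boot all_order all_algebra.
From mathcomp Require Import all_classical all_reals all_analysis.
Set Implicit Arguments. Unset Strict Implicit. Unset Printing Implicit Defensive.
Import Order.TTheory GRing.Theory Num.Theory.
Local Open Scope ring_scope.

Section EDH.
Variable R : realType.

Definition spd n (M : 'M[R]_n) : Prop :=
  M^T = M /\ forall v : 'cV[R]_n, v != 0 -> 0 < (v^T *m M *m v) 0 0.

Definition edhA nx nz (P : 'M[R]_nx) (H : 'M[R]_(nz, nx)) (Rm : 'M[R]_nz) (l : R)
  : 'M[R]_nx :=
  (- (1/2)) *: (P *m H^T *m invmx (l *: (H *m P *m H^T) + Rm) *m H).

Definition edhb nx nz (P : 'M[R]_nx) (H : 'M[R]_(nz, nx)) (Rm : 'M[R]_nz)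
  (xbar : 'cV[R]_nx) (z : 'cV[R]_nz) (l : R) : 'cV[R]_nx :=
  let A := edhA P H Rm l in
  (1%:M + (2 * l) *: A) *m
    ((1%:M + l *: A) *m P *m H^T *m invmx Rm *m z + A *m xbar).

End EDH.

From mathcomp Require Import all_boot all_order all_algebra.
From mathcomp Require Import all_classical all_reals all_analysis.
From mathcomp Require Import ring.
Set Implicit Arguments. Unset Strict Implicit. Unset Printing Implicit Defensive.
Import Order.TTheory GRing.Theory Num.Theory numFieldNormedType.Exports.
Local Open Scope ring_scope.
Local Open Scope classical_set_scope.

(* Whitening by [Rh^-1] and rotating by [V] diagonalises the problem: F^T E = Lambda,
   A(l) = E diag(-1/(2(1 + l alpha_i))) F^T and b(l) = E beta(l).  The velocity of the
   flow thus stays in the range of E, so x(1) - x(0) = E Lambda^-1 (w(1) - w(0)) for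
   w = F^T x, and w decouples into the scalar linear equations
   w_i' = alpha_i (- w_i / (2 (1 + l alpha_i)) + beta_i(l)), which are integrated in
   closed form with the integrating factor sqrt(1 + l alpha_i). *)

Section DiagFun.
Variable R : pzRingType.

Definition diagf n (f : 'I_n -> R) : 'M[R]_n := diag_mx (\row_i f i).

Lemma diag_mx_diagf n (d : 'rV[R]_n) : diag_mx d = diagf (d 0).
Proof. by congr diag_mx; apply/rowP => i; rewrite mxE. Qed.

Lemma diagfM n (f g : 'I_n -> R) : diagf f *m diagf g = diagf (fun i => f i * g i).
Proof. by apply/matrixP => i j; rewrite mul_diag_mx !mxE mulrnAr. Qed.

Lemma scale_diagf n a (f : 'I_n -> R) : a *: diagf f = diagf (fun i => a * f i).
Proof. by apply/matrixP => i j; rewrite !mxE mulrnAr. Qed.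

Lemma add1_diagf n (f : 'I_n -> R) : 1%:M + diagf f = diagf (fun i => 1 + f i).
Proof. by apply/matrixP => i j; rewrite !mxE mulrnDl. Qed.

Lemma diagf1 n (f : 'I_n -> R) : (forall i, f i = 1) -> diagf f = 1%:M.
Proof. by move=> f1; apply/matrixP => i j; rewrite !mxE f1 eq_sym. Qed.

Lemma diagf_mulmx_coord n (f : 'I_n -> R) (v : 'cV[R]_n) i :
  (diagf f *m v) i 0 = f i * v i 0.
Proof. by rewrite mul_diag_mx !mxE. Qed.

End DiagFun.

Lemma invmx_eq (R : comUnitRingType) n (A B : 'M[R]_n) :
  A *m B = 1%:M -> invmx A = B.
Proof.
move=> AB; have [A_unit _] := mulmx1_unit AB.
by rewrite -[invmx A]mulmx1 -AB mulmxA mulVmx ?mul1mx.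
Qed.

Lemma spd_unitmx (R : realType) n (M : 'M[R]_n) : spd M -> M \in unitmx.
Proof.
move=> [_ M_pos]; rewrite -row_free_unit -kermx_eq0.
apply/negPn/negP => /matrix0Pn [i [j kerM_ij]].
set u := row i (kermx M).
have uM : u *m M = 0 by apply/sub_kermxP; exact: row_sub.
have uT_neq0 : u^T != 0 by apply/matrix0Pn; exists j, ord0; rewrite 2!mxE.
by have := M_pos _ uT_neq0; rewrite trmxK uM mul0mx mxE ltxx.
Qed.

Lemma add1_mul_gt0 (R : realDomainType) (l a : R) : 0 <= l -> 0 < a -> 0 < 1 + l * a.
Proof. by move=> l_ge0 a_gt0; rewrite ltr_pwDl // mulr_ge0 // ltW. Qed.

Definition edh_beta (R : fieldType) n (alpha : 'rV[R]_n) (zt xt : 'cV[R]_n) (mu : R)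
    : 'cV[R]_n :=
  \col_i ((zt i 0 * (1 + mu * alpha 0 i / 2) - xt i 0 / 2) / (1 + mu * alpha 0 i) ^+ 2).

Section EDHLowRank.
Variables (R : realType) (nx nz : nat).
Variables (P : 'M[R]_nx) (H : 'M[R]_(nz, nx)) (Rm Rh V : 'M[R]_nz).
Variable alpha : 'rV[R]_nz.
Hypotheses (Rh_unit : Rh \in unitmx) (Rh_sqr : Rh *m Rh = Rm).
Hypothesis V_orth : V^T *m V = 1%:M.
Hypothesis alpha_gt0 : forall i, 0 < alpha 0 i.
Hypothesis HPHt_eig : invmx Rh *m H *m P *m H^T *m invmx Rh = V *m diag_mx alpha *m V^T.

Local Notation E := (P *m H^T *m invmx Rh *m V).
Local Notation Ft := (V^T *m invmx Rh *m H).

Let V_orthC : V *m V^T = 1%:M. Proof. exact: mulmx1C. Qed.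

Lemma Ft_mulmx_E : Ft *m E = diag_mx alpha.
Proof.
have -> : Ft *m E = V^T *m (invmx Rh *m H *m P *m H^T *m invmx Rh) *m V.
  by rewrite !mulmxA.
by rewrite HPHt_eig !mulmxA V_orth mul1mx -mulmxA V_orth mulmx1.
Qed.

Lemma innovation_cov_eig (l : R) : l *: (H *m P *m H^T) + Rm =
  Rh *m V *m diagf (fun i => 1 + l * alpha 0 i) *m V^T *m Rh.
Proof.
have -> : H *m P *m H^T = Rh *m (V *m diag_mx alpha *m V^T) *m Rh.
  by rewrite -HPHt_eig !mulmxA mulmxV // mul1mx mulmxKV.
rewrite -add1_diagf -scale_diagf -diag_mx_diagf -Rh_sqr.
rewrite mulmxDr !mulmxDl mulmx1 -(mulmxA Rh V V^T) V_orthC mulmx1 addrC.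
by congr (_ + _); rewrite -scalemxAr -!scalemxAl !mulmxA.
Qed.

Lemma invmx_innovation_cov (l : R) : 0 <= l ->
  invmx (l *: (H *m P *m H^T) + Rm) =
  invmx Rh *m V *m diagf (fun i => (1 + l * alpha 0 i)^-1) *m V^T *m invmx Rh.
Proof.
move=> l_ge0; apply: invmx_eq; rewrite innovation_cov_eig !mulmxA mulmxK //.
rewrite -(mulmxA _ V^T V) V_orth mulmx1 -(mulmxA _ (diagf _) (diagf _)) diagfM diagf1.
  by rewrite mulmx1 -(mulmxA Rh V) V_orthC mulmx1 mulmxV.
by move=> i; rewrite mulfV // gt_eqF // add1_mul_gt0.
Qed.

Lemma edhA_lowrank (l : R) : 0 <= l ->
  edhA P H Rm l = E *m diagf (fun i => - (1/2) / (1 + l * alpha 0 i)) *m Ft.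
Proof.
move=> l_ge0; rewrite /edhA invmx_innovation_cov // -[X in _ = _ *m X *m _]scale_diagf.
by rewrite -scalemxAr -!scalemxAl !mulmxA.
Qed.

Lemma add1_edhA_mulmx_E (l c : R) : 0 <= l ->
  (1%:M + c *: edhA P H Rm l) *m E =
  E *m diagf (fun i => 1 + c * (- (1/2) / (1 + l * alpha 0 i) * alpha 0 i)).
Proof.
move=> l_ge0; rewrite -add1_diagf -scale_diagf -diagfM -diag_mx_diagf -Ft_mulmx_E.
rewrite edhA_lowrank // mulmxDl mul1mx mulmxDr mulmx1 -scalemxAl -scalemxAr.
by rewrite !mulmxA.
Qed.

Lemma edhb_lowrank (xbar : 'cV[R]_nx) (z : 'cV[R]_nz) (l : R) : 0 <= l ->
  edhb P H Rm xbar z l = E *m edh_beta alpha (V^T *m invmx Rh *m z) (Ft *m xbar) l.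
Proof.
move=> l_ge0.
have gain_z : P *m H^T *m invmx Rm *m z = E *m (V^T *m invmx Rh *m z).
  have -> : invmx Rm = invmx Rh *m invmx Rh.
    by apply: invmx_eq; rewrite -Rh_sqr !mulmxA mulmxK // mulmxV.
  by rewrite !mulmxA -(mulmxA _ V V^T) V_orthC mulmx1.
rewrite /edhb -/(edhA P H Rm l) -!(mulmxA (_ + _)) gain_z.
have -> : edhA P H Rm l *m xbar =
    E *m (diagf (fun i => - (1/2) / (1 + l * alpha 0 i)) *m (Ft *m xbar)).
  by rewrite edhA_lowrank // !mulmxA.
rewrite mulmxA add1_edhA_mulmx_E // -mulmxA -mulmxDr mulmxA add1_edhA_mulmx_E // -mulmxA.
congr (_ *m _); apply/colP => i.
have := add1_mul_gt0 l_ge0 (alpha_gt0 i); rewrite lt0r => /andP[gain_neq0 _].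
rewrite /edh_beta [RHS]mxE diagf_mulmx_coord [(_ + _ : 'cV[R]_nz) i 0]mxE.
rewrite !diagf_mulmx_coord.
by field.
Qed.

Lemma edh_rhs_lowrank (xbar y : 'cV[R]_nx) (z : 'cV[R]_nz) (l : R) : 0 <= l ->
  edhA P H Rm l *m y + edhb P H Rm xbar z l =
  E *m (diagf (fun i => - (1/2) / (1 + l * alpha 0 i)) *m (Ft *m y)
        + edh_beta alpha (V^T *m invmx Rh *m z) (Ft *m xbar) l).
Proof. by move=> l_ge0; rewrite edhA_lowrank // edhb_lowrank // mulmxDr !mulmxA. Qed.

Lemma Ft_mulmx_edh_rhs (xbar y : 'cV[R]_nx) (z : 'cV[R]_nz) (l : R) i : 0 <= l ->
  (Ft *m (edhA P H Rm l *m y + edhb P H Rm xbar z l)) i 0 =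
  alpha 0 i * (- (1/2) / (1 + l * alpha 0 i) * (Ft *m y) i 0
    + ((V^T *m invmx Rh *m z) i 0 * (1 + l * alpha 0 i / 2) - (Ft *m xbar) i 0 / 2)
      / (1 + l * alpha 0 i) ^+ 2).
Proof.
move=> l_ge0; rewrite edh_rhs_lowrank // mulmxA Ft_mulmx_E diag_mx_diagf.
rewrite diagf_mulmx_coord [(_ + _ : 'cV[R]_nz) i 0]mxE diagf_mulmx_coord.
by rewrite [edh_beta _ _ _ _ i 0]mxE.
Qed.

End EDHLowRank.

Section LinearFlow.
Variable R : realType.

Lemma is_derive0_itv_eq (f : R -> R) (a b : R) : a <= b ->
  {within `[a, b], continuous f} ->
  (forall l, a < l < b -> is_derive l 1 f 0) -> f b = f a.
Proof.
move=> ab f_cont f'0.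
have f'0_itv l : l \in `]a, b[%R -> is_derive l 1 f 0 by rewrite in_itv => /f'0.
have [c _] := MVT_segment ab f'0_itv f_cont.
by move/eqP; rewrite mul0r subr_eq0 => /eqP.
Qed.

Let mulmx_coord_sumE m n (G : 'M[R]_(m, n)) (x : R -> 'cV[R]_n) i :
  (fun t => (G *m x t) i 0) = \sum_(k < n) (fun t => G i k * x t k 0).
Proof. by apply/funext => t; rewrite fct_sumE mxE. Qed.

Lemma is_derive_mulmx_coord m n (G : 'M[R]_(m, n)) (x : R -> 'cV[R]_n)
    (dx : 'cV[R]_n) (l : R) i :
  (forall k, is_derive l 1 (fun t => x t k 0) (dx k 0)) ->
  is_derive l 1 (fun t => (G *m x t) i 0) ((G *m dx) i 0).
Proof.
by move=> x'; rewrite mulmx_coord_sumE mxE; apply: is_derive_sum.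
Qed.

Lemma continuous_mulmx_coord m n (A : set R) (G : 'M[R]_(m, n)) (x : R -> 'cV[R]_n) i :
  (forall k, {within A, continuous (fun t => x t k 0)}) ->
  {within A, continuous (fun t => (G *m x t) i 0)}.
Proof.
rewrite mulmx_coord_sumE => x_cont t.
elim/big_ind: _ => [|f g f_cont g_cont|k _]; first exact: cvg_cst.
  exact: continuousD.
by apply: continuousM; [exact: cvg_cst | exact: x_cont].
Qed.

Lemma flow_increment_in_range nx nz (E : 'M[R]_(nx, nz)) (Ft : 'M[R]_(nz, nx))
    (alpha : 'rV[R]_nz) (x : R -> 'cV[R]_nx) (g : R -> 'cV[R]_nz) (a b : R) :
  a <= b -> Ft *m E = diag_mx alpha -> (forall i, alpha 0 i != 0) ->
  (forall k, {within `[a, b], continuous (fun t => x t k 0)}) ->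
  (forall l, a < l < b -> forall k,
     is_derive l 1 (fun t => x t k 0) ((E *m g l) k 0)) ->
  x b = x a + E *m diagf (fun i => (alpha 0 i)^-1) *m (Ft *m x b - Ft *m x a).
Proof.
move=> ab FtE alpha_neq0 x_cont x'.
(* [M] projects onto the range of [E] along the kernel of [Ft]. *)
set M := E *m diagf (fun i => (alpha 0 i)^-1) *m Ft.
have ME : M *m E = E.
  rewrite -mulmxA FtE diag_mx_diagf -mulmxA diagfM diagf1 ?mulmx1 // => i.
  by rewrite mulVf.
have x_proj : (1%:M - M) *m x b = (1%:M - M) *m x a.
  apply/colP => k.
  apply: (is_derive0_itv_eq (f := fun t => ((1%:M - M) *m x t) k 0) ab).
    exact: continuous_mulmx_coord.
  move=> l l_ab; have := is_derive_mulmx_coord (1%:M - M) k (x' l l_ab).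
  by rewrite mulmxA mulmxBl mul1mx ME subrr mul0mx mxE.
move: x_proj; rewrite !mulmxBl !mul1mx => /eqP; rewrite subr_eq => /eqP {1}->.
by rewrite mulmxBr !mulmxA addrAC [RHS]addrA.
Qed.

End LinearFlow.

Section ScalarEDHFlow.
Variables (R : realType) (a zt xt : R) (w : R -> R).
Hypothesis a_gt0 : 0 < a.

(* [sqrt (1 + t a)] is an integrating factor of the homogeneous part
   [w' = - a w / (2 (1 + t a))], hence this quantity is conserved. *)
Definition edh_first_integral (t : R) : R :=
  Num.sqrt (1 + t * a) * w t - (xt + t * (a * zt)) / Num.sqrt (1 + t * a).

Let is_derive_affine (l c d : R) : is_derive l 1 (fun t => c + t * d) d.
Proof. by apply: is_derive_eq; rewrite add0r mul1r scaler0 add0r [d%:A]mulr1. Qed.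

Lemma is_derive_edh_first_integral (l : R) : 0 <= l ->
  is_derive l 1 w (a * (- (1/2) / (1 + l * a) * w l
                       + (zt * (1 + l * a / 2) - xt / 2) / (1 + l * a) ^+ 2)) ->
  is_derive l 1 edh_first_integral 0.
Proof.
move=> l_ge0 w'; have gain_gt0 := add1_mul_gt0 l_ge0 a_gt0.
pose S t := Num.sqrt (1 + t * a).
have S' : is_derive l 1 S ((2 * S l)^-1 * a).
  exact: (@is_derive1_comp R Num.sqrt _ l _ _ (is_derive1_sqrt gain_gt0)
                                               (is_derive_affine l 1 a)).
have Sl_neq0 : S l != 0 by rewrite sqrtr_eq0 -ltNge.
have -> : edh_first_integral =
          (S * w - (fun t => xt + t * (a * zt)) * (fun t => (S t)^-1))%R by [].
apply: is_derive_eq; rewrite scaler0 add0r mul1r [_%:A]mulr1 [l * (a * zt)]mulrA.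
have la : l * a = S l ^+ 2 - 1.
  by rewrite sqr_sqrtr ?ltW // addrAC subrr add0r.
rewrite la; move: Sl_neq0; move: (S l) => s s_neq0.
have -> : 1 + (s ^+ 2 - 1) = s ^+ 2 by rewrite addrC subrK.
by rewrite /GRing.scale /=; field.
Qed.

Let continuous_affine (c d : R) : continuous (fun t : R => c + t * d).
Proof.
move=> t; apply/differentiable_continuous/derivable1_diffP.
by have [] := is_derive_affine t c d.
Qed.

Lemma continuous_edh_first_integral :
  {within `[0, 1], continuous w} -> {within `[0, 1], continuous edh_first_integral}.
Proof.
move=> w_cont; rewrite continuous_subspace_in => t t01.
have /andP[t_ge0 _] : 0 <= t <= 1 by move: t01; rewrite inE /= in_itv.
have S_cont : {for t, continuous (fun u : R => Num.sqrt (1 + u * a))}.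
  by apply: continuous_comp; [exact: continuous_affine | exact: sqrt_continuous].
have St_neq0 : Num.sqrt (1 + t * a) != 0.
  by rewrite sqrtr_eq0 -ltNge add1_mul_gt0.
apply: (@continuousB R _ (subspace `[(0:R), 1]) (fun u => Num.sqrt (1 + u * a) * w u)
                    (fun u => (xt + u * (a * zt)) / Num.sqrt (1 + u * a)) t).
  apply: (@continuousM R (subspace `[(0:R), 1])); last exact: w_cont.
  exact: continuous_subspaceT_for (set_mem t01) S_cont.
apply: continuous_subspaceT_for (set_mem t01) _; apply: continuousM.
  exact: continuous_affine.
exact: continuousV.
Qed.

Lemma edh_scalar_flow :
  {within `[0, 1], continuous w} ->
  (forall l : R, 0 < l < 1 -> is_derive l 1 w
     (a * (- (1/2) / (1 + l * a) * w l
           + (zt * (1 + l * a / 2) - xt / 2) / (1 + l * a) ^+ 2))) ->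
  (w 1 - w 0) / a = ((Num.sqrt (1 + a))^-1 - 1) / a * w 0
                    + (a * zt + xt * (1 - Num.sqrt (1 + a))) / (a * (1 + a)).
Proof.
move=> w_cont w'.
have : edh_first_integral 1 = edh_first_integral 0.
  apply: is_derive0_itv_eq ler01 (continuous_edh_first_integral w_cont) _.
  move=> l /[dup] /andP[l_gt0 _] /w'; exact: is_derive_edh_first_integral (ltW l_gt0).
rewrite /edh_first_integral !mul0r !addr0 sqrtr1 !mul1r invr1 mulr1.
have s_gt0 : 0 < Num.sqrt (1 + a) by rewrite sqrtr_gt0 addr_gt0.
have a_sqr : a = Num.sqrt (1 + a) ^+ 2 - 1.
  by rewrite sqr_sqrtr ?addr_ge0 ?ltW // addrAC subrr add0r.
move: s_gt0 a_sqr; move: (Num.sqrt (1 + a)) => s s_gt0 a_sqr first_integral_cst.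
have -> : w 1 = (w 0 - xt + (xt + a * zt) / s) / s.
  by rewrite -first_integral_cst; field; rewrite gt_eqF.
have a_neq0 : s ^+ 2 - 1 != 0 by rewrite -a_sqr gt_eqF.
by rewrite a_sqr; field; rewrite addrC subrK sqrf_eq0 a_neq0 gt_eqF.
Qed.

End ScalarEDHFlow.

Theorem mainTheorem3 (R : realType) (nx nz : nat)
  (P : 'M[R]_nx) (Rm : 'M[R]_nz) (H : 'M[R]_(nz, nx))
  (xbar : 'cV[R]_nx) (z : 'cV[R]_nz)
  (Rh : 'M[R]_nz) (* the SPD square root of Rm *)
  (V : 'M[R]_nz) (alpha : 'rV[R]_nz)
  (x0 : 'cV[R]_nx) (x : R -> 'cV[R]_nx) :
  spd P -> spd Rm -> \rank H = nz ->
  spd Rh -> Rh *m Rh = Rm ->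
  V^T *m V = 1%:M ->
  (forall i, 0 < alpha 0 i) ->
  invmx Rh *m H *m P *m H^T *m invmx Rh = V *m diag_mx alpha *m V^T ->
  (* x solves dx/dl = A(l) x + b(l) on [0,1], x(0) = x0 *)
  x 0 = x0 ->
  (forall k, {within `[(0:R), 1], continuous (fun t => x t k 0)}) ->
  (forall l : R, 0 < l < 1 -> forall k,
     is_derive l 1 (fun t => x t k 0)
       ((edhA P H Rm l *m x l + edhb P H Rm xbar z l) k 0)) ->
  let E := P *m H^T *m invmx Rh *m V in
  let Ft := V^T *m invmx Rh *m H in
  let zt := V^T *m invmx Rh *m z in
  let xt := Ft *m xbar in
  let Omega := diag_mx (\row_i (((Num.sqrt (1 + alpha 0 i))^-1 - 1) / alpha 0 i)) in
  let Phi := 1%:M + E *m Omega *m Ft in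
  let c : 'cV[R]_nz := \col_i
      ((alpha 0 i * zt i 0 + xt i 0 * (1 - Num.sqrt (1 + alpha 0 i))) /
       (alpha 0 i * (1 + alpha 0 i))) in
  let beta (mu : R) : 'cV[R]_nz := \col_i
      ((zt i 0 * (1 + mu * alpha 0 i / 2) - xt i 0 / 2) / (1 + mu * alpha 0 i) ^+ 2) in
  x 1 = Phi *m x0 + E *m c /\
  (forall mu : R, 0 <= mu <= 1 -> edhb P H Rm xbar z mu = E *m beta mu).
Proof.
move=> _ _ _ Rh_spd Rh_sqr V_orth alpha_gt0 HPHt_eig x_0 x_cont x'.
move=> E Ft zt xt Omega Phi c beta.
have Rh_unit := spd_unitmx Rh_spd.
split=> [|mu /andP[mu_ge0 _]]; last exact: edhb_lowrank.
have x_1 : x 1 = x 0 + E *m diagf (fun i => (alpha 0 i)^-1) *m (Ft *m x 1 - Ft *m x 0).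
  apply: (flow_increment_in_range (g := fun l =>
     diagf (fun i => - (1/2) / (1 + l * alpha 0 i)) *m (Ft *m x l) + beta l))
    ler01 (Ft_mulmx_E V_orth HPHt_eig) _ x_cont _ => [i|l l01 k].
    by rewrite gt_eqF.
  have /andP[l_gt0 _] := l01.
  by rewrite -(edh_rhs_lowrank Rh_unit Rh_sqr V_orth alpha_gt0 HPHt_eig) ?ltW //; exact: x'.
have w' i (l : R) : 0 < l < 1 -> is_derive l 1 (fun t => (Ft *m x t) i 0)
    (alpha 0 i * (- (1/2) / (1 + l * alpha 0 i) * (Ft *m x l) i 0
      + (zt i 0 * (1 + l * alpha 0 i / 2) - xt i 0 / 2) / (1 + l * alpha 0 i) ^+ 2)).
  move=> /[dup] /andP[l_gt0 _] l01.
  apply: is_derive_eq (is_derive_mulmx_coord Ft i (x' l l01)) _.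
  exact: Ft_mulmx_edh_rhs (ltW l_gt0).
have w_1 i := edh_scalar_flow (alpha_gt0 i)
  (continuous_mulmx_coord (G := Ft) (i := i) x_cont) (w' i).
rewrite x_1 -x_0 /Phi mulmxDl mul1mx -addrA -(mulmxA E) -(mulmxA (E *m Omega)).
rewrite -(mulmxA E Omega) -mulmxDr; congr (_ + E *m _); apply/colP => i.
rewrite diagf_mulmx_coord [(_ - _ : 'cV[R]_nz) i 0]mxE [(- _ : 'cV[R]_nz) i 0]mxE.
by rewrite [(_ + _ : 'cV[R]_nz) i 0]mxE mulrC w_1 /Omega /c mul_diag_mx !mxE.
Qed.
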